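(* Every polyhedral loss $L:\mathbb{R}^d\to\mathbb{R}^{\mathcal{Y}}_+$ embeds some discrete loss.
   Context: $\mathcal{Y}$ is a finite set of labels; $\mathbb{R}^{\mathcal{Y}}_+$ is the nonnegative orthant; $\Delta_{\mathcal{Y}}$ is the probability simplex on $\mathcal{Y}$. A loss is a map $L:\mathcal{R}\to\mathbb{R}^{\mathcal{Y}}_+$; expected loss under $p$ is $\langle p,L(r)\rangle$. A loss is discrete if its report set $\mathcal{R}$ is finite. $L:\mathbb{R}^d\to\mathbb{R}^{\mathcal{Y}}_+$ is polyhedral if each coordinate $u\mapsto L(u)_y$ is a pointwise maximum of finitely many affine functions. $L$ is minimizable if $\inf_r\langle p,L(r)\rangle$ is attained for all $p\in\Delta_{\mathcal{Y}}$; then $\mathrm{prop}[L](p)=\arg\min_r\langle p,L(r)\rangle$. $\mathcal{S}\subseteq\mathcal{R}$ is representative for a minimizable loss $L$ if $\mathrm{prop}[L](p)\cap\mathcal{S}\neq\emptyset$ for all $p$. A minimizable $L:\mathbb{R}^d\to\mathbb{R}^{\mathcal{Y}}_+$ embeds $\ell:\mathcal{R}\to\mathbb{R}^{\mathcal{Y}}_+$ if there exist a representative set $\mathcal{S}$ for $\ell$ and an injective $\varphi:\mathcal{S}\to\mathbb{R}^d$ with (i) $L(\varphi(r))=\ell(r)$ for all $r\in\mathcal{S}$ and (ii) for all $p\in\Delta_{\mathcal{Y}}$, $r\in\mathcal{S}$: $r\in\mathrm{prop}[\ell](p)\iff\varphi(r)\in\mathrm{prop}[L](p)$. *)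

From mathcomp Require Import all_boot all_order all_algebra.
From mathcomp Require Import reals.
Set Implicit Arguments. Unset Strict Implicit. Unset Printing Implicit Defensive.
Import Order.TTheory GRing.Theory Num.Theory.
Local Open Scope ring_scope.

Section Losses.
Variables (R : realType) (Y : finType).

Definition simplex (p : Y -> R) : Prop :=
  (forall y, 0 <= p y) /\ \sum_(y : Y) p y = 1.

Definition eloss (p : Y -> R) (v : Y -> R) : R := \sum_(y : Y) p y * v y.

Definition in_prop {Rep : Type} (L : Rep -> Y -> R) (p : Y -> R) (r : Rep) : Prop :=
  forall r' : Rep, eloss p (L r) <= eloss p (L r').

Definition minimizable {Rep : Type} (L : Rep -> Y -> R) : Prop :=
  forall p, simplex p -> exists r : Rep, in_prop L p r.

Definition representative {Rep : Type} (L : Rep -> Y -> R) (S : Rep -> Prop) : Prop :=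
  forall p, simplex p -> exists r, S r /\ in_prop L p r.

Definition embeds (d : nat) (L : ('I_d -> R) -> Y -> R) {Rep : Type}
    (ell : Rep -> Y -> R) : Prop :=
  minimizable L /\
  exists (S : Rep -> Prop) (phi : Rep -> ('I_d -> R)),
    representative ell S /\
    (forall r1 r2, S r1 -> S r2 -> phi r1 = phi r2 -> r1 = r2) /\
    (forall r, S r -> forall y, L (phi r) y = ell r y) /\
    (forall p r, simplex p -> S r -> (in_prop ell p r <-> in_prop L p (phi r))).

Definition polyhedral (d : nat) (L : ('I_d -> R) -> Y -> R) : Prop :=
  forall y : Y, exists (n : nat) (a : 'I_n.+1 -> 'I_d -> R) (b : 'I_n.+1 -> R),
    forall u : 'I_d -> R,
      (forall i, \sum_(k < d) a i k * u k + b i <= L u y) /\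
      (exists i, L u y = \sum_(k < d) a i k * u k + b i).

End Losses.

From mathcomp Require Import all_boot all_order all_algebra.
From mathcomp Require Import reals.
From mathcomp Require Import boolp lra.
Import Order.TTheory GRing.Theory Num.Theory.
Local Open Scope ring_scope.
Set Implicit Arguments. Unset Strict Implicit. Unset Printing Implicit Defensive.

(* Write each coordinate of L as a maximum of N+1 affine pieces and record the
   set of pieces active at a report u.  Call u a vertex if every direction
   along which the active pieces of each coordinate keep equal slopes is a
   lineality direction of L.  Since L is nonnegative it is invariant along
   lineality directions, so at a vertex L is determined by its active set.
   From any u one reaches a vertex without increasing the expected loss: along
   a non-lineality direction keeping the active pieces tied, the expected loss
   is affine until a new piece becomes active, and nonnegativity forbids an
   unbounded descent.  The finitely many active sets of vertices, each scored
   by the loss at a chosen vertex, form a discrete loss that L embeds. *)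

Lemma exists_argmin (R : realDomainType) (I : finType) (P : I -> Prop) (F : I -> R) :
  (exists i, P i) -> exists i, P i /\ forall j, P j -> F i <= F j.
Proof.
move=> [i0 Pi0].
have /asboolP Pi0' := Pi0.
have [i /asboolP Pi i_min] := @arg_minP _ _ I i0 (fun i => `[< P i >]) F Pi0'.
by exists i; split=> // j /asboolP /i_min.
Qed.

Section Embedding.
Variables (R : realType) (Y : finType).
Implicit Types p f g : Y -> R.

Lemma eloss_ge0 p f : (forall y, 0 <= p y) -> (forall y, 0 <= f y) -> 0 <= eloss p f.
Proof. by move=> p_ge0 f_ge0; apply: sumr_ge0 => y _; apply: mulr_ge0. Qed.

Lemma eloss_affine p f g t :
  eloss p (fun y => f y + t * g y) = eloss p f + t * eloss p g.
Proof.
by rewrite /eloss mulr_sumr -big_split; apply: eq_bigr => y _; rewrite mulrDr mulrCA.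
Qed.

Lemma elossN p f : eloss p (fun y => - f y) = - eloss p f.
Proof. by rewrite /eloss -sumrN; apply: eq_bigr => y _; rewrite mulrN. Qed.

Lemma embeds_of_dominating (Rep : finType) (d : nat) (L : ('I_d -> R) -> Y -> R)
    (S : Rep -> Prop) (phi : Rep -> 'I_d -> R) :
  (forall r1 r2, S r1 -> S r2 -> phi r1 = phi r2 -> r1 = r2) ->
  (forall p, simplex p -> forall u,
     exists2 r, S r & eloss p (L (phi r)) <= eloss p (L u)) ->
  embeds L (fun r => L (phi r)).
Proof.
move=> phi_inj dom.
have prop_phi p r : simplex p ->
    in_prop (fun r => L (phi r)) p r <-> in_prop L p (phi r).
  move=> sp; split=> [r_opt u | r_opt r']; last exact: r_opt.
  by have [r' _ le_r'] := dom p sp u; apply: le_trans (r_opt r') le_r'.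
have opt_in_S p : simplex p -> exists r, S r /\ in_prop L p (phi r).
  move=> sp; have [r0 Sr0 _] := dom p sp (fun _ => 0).
  have [r [Sr r_min]] := exists_argmin (fun r => eloss p (L (phi r))) (ex_intro S r0 Sr0).
  exists r; split=> // u.
  by have [r' Sr' le_r'] := dom p sp u; apply: le_trans (r_min _ Sr') le_r'.
split=> [p sp|]; first by have [r [_ r_opt]] := opt_in_S p sp; exists (phi r).
exists S, phi; split=> [p sp|].
  by have [r [Sr /(prop_phi _ _ sp) r_opt]] := opt_in_S p sp; exists r.
by split=> //; split=> // p r sp _; apply: prop_phi.
Qed.

End Embedding.

Section Vectors.
Variables (R : comPzRingType) (d : nat).
Implicit Types u v w x : 'I_d -> R.

Definition dot x v := \sum_(k < d) x k * v k.

Definition vadd u (t : R) w : 'I_d -> R := fun k => u k + t * w k.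

Lemma dot_vadd x u t w : dot x (vadd u t w) = dot x u + t * dot x w.
Proof.
rewrite /dot /vadd mulr_sumr -big_split; apply: eq_bigr => k _.
by rewrite mulrDr mulrCA.
Qed.

Lemma dotN x w : dot x (fun k => - w k) = - dot x w.
Proof. by rewrite /dot -sumrN; apply: eq_bigr => k _; rewrite mulrN. Qed.

End Vectors.

Section MaxAffine.
Variables (R : realType) (Y : finType) (d N : nat).
Variables (a : Y -> 'I_N.+1 -> 'I_d -> R) (b : Y -> 'I_N.+1 -> R).
Variable L : ('I_d -> R) -> Y -> R.

Definition aff y i u := dot (a y i) u + b y i.

Hypothesis L_ge0 : forall u y, 0 <= L u y.
Hypothesis aff_le_L : forall u y i, aff y i u <= L u y.
Hypothesis L_attained : forall u y, exists i, L u y = aff y i u.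

Implicit Type p : Y -> R.

Definition act u : {set Y * 'I_N.+1} := [set k | L u k.1 == aff k.1 k.2 u].

Definition flat_on (P : {set Y * 'I_N.+1}) v := forall y i j,
  (y, i) \in P -> (y, j) \in P -> dot (a y i) v = dot (a y j) v.

Definition lineal v := forall y i j, dot (a y i) v = dot (a y j) v.

Definition vertex u := forall v, flat_on (act u) v -> lineal v.

Definition sel u y := odflt ord0 [pick i | (y, i) \in act u].

Definition slope u w y := dot (a y (sel u y)) w.

Definition gap u (k : Y * 'I_N.+1) := L u k.1 - aff k.1 k.2 u.

Definition rate u w (k : Y * 'I_N.+1) := dot (a k.1 k.2) w - slope u w k.1.

Definition rising u w := exists k, k \notin act u /\ 0 < rate u w k.

Lemma act_L u y i : (y, i) \in act u -> L u y = aff y i u.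
Proof. by rewrite inE => /eqP. Qed.

Lemma sel_act u y : (y, sel u y) \in act u.
Proof.
rewrite /sel; case: pickP => [//|none].
by have [i Li] := L_attained u y; move: (none i); rewrite inE Li eqxx.
Qed.

Lemma gap_ge0 u k : 0 <= gap u k.
Proof. by rewrite subr_ge0 aff_le_L. Qed.

Lemma aff_vadd y i u t w : aff y i (vadd u t w) = aff y i u + t * dot (a y i) w.
Proof. by rewrite /aff dot_vadd addrAC. Qed.

Section Move.
Variables u w : 'I_d -> R.
Hypothesis w_flat : flat_on (act u) w.

Lemma aff_vadd_act y i t :
  (y, i) \in act u -> aff y i (vadd u t w) = L u y + t * slope u w y.
Proof. by move=> yi; rewrite aff_vadd (w_flat yi (sel_act u y)) -act_L. Qed.

Lemma aff_vadd_le y j t : t * rate u w (y, j) <= gap u (y, j) ->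
  aff y j (vadd u t w) <= L u y + t * slope u w y.
Proof. by rewrite aff_vadd /rate /gap /= mulrBr; lra. Qed.

Lemma L_vadd y t :
  (forall j, (y, j) \notin act u -> t * rate u w (y, j) <= gap u (y, j)) ->
  L (vadd u t w) y = L u y + t * slope u w y.
Proof.
move=> inact_le; apply/eqP; rewrite eq_le; apply/andP; split.
  have [j ->] := L_attained (vadd u t w) y.
  have [/aff_vadd_act-> // | /inact_le /aff_vadd_le //] := boolP ((y, j) \in act u).
by rewrite -(aff_vadd_act t (sel_act u y)).
Qed.

Lemma eloss_vadd p t :
  (forall y, L (vadd u t w) y = L u y + t * slope u w y) ->
  eloss p (L (vadd u t w)) = eloss p (L u) + t * eloss p (slope u w).
Proof. by move=> /funext->; rewrite eloss_affine. Qed.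

(* The ratio test of the simplex method: step until the first inactive piece
   catches up with L. *)
Lemma reach_new_piece : rising u w ->
  exists2 t, 0 <= t & act u \proper act (vadd u t w) /\
    forall y, L (vadd u t w) y = L u y + t * slope u w y.
Proof.
move=> w_rising.
have [k [[k_inact k_rate] k_min]] := exists_argmin (fun k => gap u k / rate u w k) w_rising.
set t := gap u k / rate u w k.
have t_ge0 : 0 <= t by rewrite divr_ge0 ?gap_ge0 ?ltW.
have L_move y : L (vadd u t w) y = L u y + t * slope u w y.
  apply: L_vadd => j j_inact.
  have [rate_gt0 | rate_le0] := ltP 0 (rate u w (y, j)).
    by rewrite -ler_pdivlMr // k_min.
  exact: le_trans (mulr_ge0_le0 t_ge0 rate_le0) (gap_ge0 _ _).
exists t => //; split=> //; rewrite properE; apply/andP; split.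
  by apply/subsetP => -[y i] yi; rewrite inE /= L_move aff_vadd_act.
apply/subsetPn; exists k => //.
have : t * rate u w k = gap u k by rewrite divfK // gt_eqF.
by rewrite inE L_move aff_vadd /rate /gap mulrBr => ?; apply/eqP; lra.
Qed.

Lemma rising_of_descent p : (forall y, 0 <= p y) ->
  eloss p (slope u w) < 0 -> rising u w.
Proof.
move=> p_ge0 s_lt0; have [//|none] := pselect (rising u w).
have rate_le0 k : k \notin act u -> rate u w k <= 0.
  by move=> k_inact; rewrite leNgt; apply/negP => k_rate; apply: none; exists k.
(* Otherwise L stays affine along the whole ray u + t w, t >= 0, and at this
   t the expected loss would be -1. *)
set t := (eloss p (L u) + 1) / - eloss p (slope u w).
have t_ge0 : 0 <= t by rewrite divr_ge0 ?oppr_ge0 ?ltW // ltr_wpDl ?eloss_ge0.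
have L_move y : L (vadd u t w) y = L u y + t * slope u w y.
  apply: L_vadd => j /rate_le0 rate_j_le0.
  exact: le_trans (mulr_ge0_le0 t_ge0 rate_j_le0) (gap_ge0 _ _).
have := eloss_ge0 p_ge0 (L_ge0 (vadd u t w)).
have : t * eloss p (slope u w) = - (eloss p (L u) + 1).
  by rewrite /t invrN mulrN mulNr divfK // lt_eqF.
by rewrite (eloss_vadd p L_move); lra.
Qed.

Lemma descend_along p : eloss p (slope u w) <= 0 -> rising u w ->
  exists2 u', act u \proper act u' & eloss p (L u') <= eloss p (L u).
Proof.
move=> s_le0 /reach_new_piece [t t_ge0 [act_lt L_move]].
exists (vadd u t w) => //.
by rewrite (eloss_vadd p L_move) gerDl mulr_ge0_le0.
Qed.

End Move.

Lemma L_vadd_lineal u w t y : lineal w -> L (vadd u t w) y = L u y.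
Proof.
move=> w_lin.
have w_flat : flat_on (act u) w by move=> ? ? ? _ _; apply: w_lin.
have L_move s : L (vadd u s w) y = L u y + s * slope u w y.
  by apply: L_vadd => // j _; rewrite /rate (w_lin y j (sel u y)) subrr mulr0 gap_ge0.
have slope0 : slope u w y = 0.
  apply/eqP; apply/negPn/negP => slope_neq0.
  have := L_ge0 (vadd u (- (L u y + 1) / slope u w y) w) y.
  by rewrite L_move divfK //; lra.
by rewrite L_move slope0 mulr0 addr0.
Qed.

Lemma vertex_L_eq u u' : vertex u -> act u \subset act u' -> L u' = L u.
Proof.
move=> u_vertex /subsetP act_sub; apply/funext => y.
pose w k := u' k - u k.
have u'E : u' = vadd u 1 w by apply/funext => k; rewrite /vadd /w mul1r addrC subrK.
have w_lin : lineal w.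
  apply: u_vertex => y' i j yi yj.
  move: (act_L yi) (act_L yj) (act_L (act_sub _ yi)) (act_L (act_sub _ yj)).
  by rewrite u'E !aff_vadd !mul1r; lra.
by rewrite u'E L_vadd_lineal.
Qed.

Lemma exists_inactive_rate_neq0 u v : flat_on (act u) v -> ~ lineal v ->
  exists k, k \notin act u /\ rate u v k != 0.
Proof.
move=> v_flat /existsNP [y /existsNP [i /existsNP [j /eqP slope_ij]]].
have [k slope_k] : exists k, dot (a y k) v != slope u v y.
  case: (eqVneq (dot (a y i) v) (slope u v y)) => [slope_i|]; last by exists i.
  by exists j; rewrite -slope_i eq_sym.
exists (y, k); split; last by rewrite subr_eq0.
by apply: contra slope_k => yk; rewrite (v_flat _ _ _ yk (sel_act u y)).
Qed.

Lemma improving_direction p u : (forall y, 0 <= p y) -> ~ vertex u ->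
  exists w, [/\ flat_on (act u) w, eloss p (slope u w) <= 0 & rising u w].
Proof.
move=> p_ge0 /existsNP [v /not_implyP [v_flat]].
move=> /(exists_inactive_rate_neq0 v_flat) [k [k_inact rate_k]].
pose nv k := - v k.
have nv_flat : flat_on (act u) nv.
  by move=> y i j yi yj; rewrite !dotN (v_flat _ _ _ yi yj).
have slopeN : eloss p (slope u nv) = - eloss p (slope u v).
  by rewrite -elossN; congr eloss; apply/funext => y; rewrite /slope dotN.
have rateN : rate u nv k = - rate u v k.
  by rewrite /rate /slope !dotN opprK opprB addrC.
case: (ltgtP (eloss p (slope u v)) 0) => [s_lt0 | s_gt0 | s0].
- by exists v; split; [| exact: ltW | exact: (rising_of_descent v_flat p_ge0)].
- exists nv; split=> //; first by rewrite slopeN; lra.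
  by apply: (rising_of_descent nv_flat p_ge0); rewrite slopeN; lra.
case: (ltgtP (rate u v k) 0) => [r_lt0 | r_gt0 | r0]; last by rewrite r0 eqxx in rate_k.
- by exists nv; rewrite slopeN s0 oppr0; split=> //; exists k; rewrite rateN oppr_gt0.
- by exists v; rewrite s0; split=> //; exists k.
Qed.

Lemma exists_vertex_le p u : (forall y, 0 <= p y) ->
  exists2 u', vertex u' & eloss p (L u') <= eloss p (L u).
Proof.
move=> p_ge0; move: (ltnSn #|~: act u|); move: {2}#|~: act u|.+1 => n.
elim: n u => // n IH u card_lt.
have [u_vertex | /(improving_direction p_ge0) [w [w_flat s_le0 w_rising]]] :=
  pselect (vertex u); first by exists u.
have [u' act_lt le_u'] := descend_along w_flat s_le0 w_rising.
have card_lt' : (#|~: act u'| < n)%N.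
  by rewrite -ltnS (leq_trans _ card_lt) // ltnS proper_card // properC.
by have [u'' u''_vertex le_u''] := IH u' card_lt'; exists u'' => //; apply: le_trans le_u'.
Qed.

Definition vertex_pattern (P : {set Y * 'I_N.+1}) := exists2 u, vertex u & act u = P.

Lemma max_affine_embeds : exists (Rep : finType) (ell : Rep -> Y -> R),
  (forall r y, 0 <= ell r y) /\ embeds L ell.
Proof.
have phi_ex P : exists u, vertex_pattern P -> vertex u /\ act u = P.
  have [[u u_vertex uP] | notP] := pselect (vertex_pattern P); first by exists u.
  by exists (fun=> 0).
have [phi phiP] := choice phi_ex.
exists {set Y * 'I_N.+1}, (fun P => L (phi P)); split=> [P y|]; first exact: L_ge0.
apply: (@embeds_of_dominating _ _ _ _ _ vertex_pattern).
  by move=> P1 P2 /phiP [_ act1] /phiP [_ act2] phi12; rewrite -act1 -act2 phi12.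
move=> p [p_ge0 _] u; have [u' u'_vertex le_u'] := exists_vertex_le u p_ge0.
have pattern_u' : vertex_pattern (act u') by exists u'.
exists (act u') => //; have [_ act_phi] := phiP _ pattern_u'.
by have -> : L (phi (act u')) = L u' by apply: vertex_L_eq; rewrite ?act_phi.
Qed.

End MaxAffine.

Lemma polyhedral_max_affine (R : realType) (Y : finType) (d : nat)
    (L : ('I_d -> R) -> Y -> R) :
  polyhedral L -> exists N (a : Y -> 'I_N.+1 -> 'I_d -> R) (b : Y -> 'I_N.+1 -> R),
    (forall u y i, aff a b y i u <= L u y) /\
    (forall u y, exists i, L u y = aff a b y i u).
Proof.
move=> L_poly.
have nab_ex y : exists nab : {n : nat & ('I_n.+1 -> 'I_d -> R) * ('I_n.+1 -> R)},
    forall u, (forall i, \sum_(k < d) (tagged nab).1 i k * u k + (tagged nab).2 i <= L u y) /\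
      exists i, L u y = \sum_(k < d) (tagged nab).1 i k * u k + (tagged nab).2 i.
  by have [n [a [b ab]]] := L_poly y; exists (existT _ n (a, b)).
have [nab nabP] := choice nab_ex.
pose N := (\max_y tag (nab y))%N.
(* [inord] maps indices beyond [tag (nab y)] to piece 0, so padding only repeats a piece. *)
exists N, (fun y i => (tagged (nab y)).1 (inord i)), (fun y i => (tagged (nab y)).2 (inord i)).
split=> [u y i | u y]; first exact: (nabP y u).1.
have [_ [i ->]] := nabP y u.
have i_le : (i < N.+1)%N by rewrite ltnS (leq_trans (ltnSE (ltn_ord i))) ?leq_bigmax.
by exists (inord i); rewrite /aff /= inordK ?inord_val.
Qed.

Theorem theorem3 (R : realType) (Y : finType) (d : nat)
    (L : ('I_d -> R) -> Y -> R) :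
  (forall u y, 0 <= L u y) ->
  polyhedral L ->
  exists (Rep : finType) (ell : Rep -> Y -> R),
    (forall r y, 0 <= ell r y) /\ embeds L ell.
Proof.
move=> L_ge0 /polyhedral_max_affine [N [a [b [aff_le_L L_attained]]]].
exact: max_affine_embeds L_ge0 aff_le_L L_attained.
Qed.
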